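(* Let $\phi$ be a quantum channel on $\mathcal M(d;\mathbb C)$ with more than $d$ eigenvalues of modulus $1$ counted with multiplicity, i.e. $|\sigma_P(\phi)|>d$. Then $\phi$ is asymptotically entanglement-saving.
   Context: A quantum channel is a completely positive, trace-preserving linear map on $\mathcal M(d;\mathbb C)$, regarded as a linear operator on the $d^2$-dimensional space $\mathcal M(d;\mathbb C)$ for spectral purposes. $|\sigma_P(\phi)|$ is the number of its eigenvalues of modulus $1$ counted with multiplicity. A channel is entanglement-breaking if $(\psi\otimes I)(\rho)$ is separable for every bipartite state $\rho$. $\phi$ is asymptotically entanglement-saving (AES) if no limit point of the sequence $(\phi^n)_{n\in\mathbb N}$ of its powers is entanglement-breaking. *)

(* The complex field is modelled by an arbitrary
   Archimedean, Cauchy-complete, numeric algebraically closed field C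
   (any such field is isomorphic to the complex numbers). *)
From HB Require Import structures.
From mathcomp Require Import all_boot all_order all_algebra.
Set Implicit Arguments. Unset Strict Implicit. Unset Printing Implicit Defensive.
Import Order.TTheory GRing.Theory Num.Theory.
Local Open Scope ring_scope.

Section QDefs.
Variable C : archiClosedFieldType.

Definition cauchy_seq (u : nat -> C) :=
  forall e : C, 0 < e -> exists N : nat,
    forall m n : nat, (N <= m)%N -> (N <= n)%N -> `|u m - u n| < e.
Definition converges (u : nat -> C) :=
  exists l : C, forall e : C, 0 < e -> exists N : nat,
    forall n : nat, (N <= n)%N -> `|u n - l| < e.
Definition complete_field := forall u : nat -> C, cauchy_seq u -> converges u.

Definition adjmx m n (A : 'M[C]_(m, n)) : 'M[C]_(n, m) := (map_mx Num.conj A)^T.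

(* positive semidefinite: v^* A v >= 0 for all v (this forces A hermitian) *)
Definition psd n (A : 'M[C]_n) :=
  forall v : 'cV[C]_n, 0 <= (adjmx v *m A *m v) 0 0.

Definition is_state n (A : 'M[C]_n) := psd A /\ \tr A = 1.

(* Decoding an index of C^m (x) C^n = C^(m*n) (mxvec_index convention). *)
Definition pidx m n (p : 'I_(m * n)) : 'I_m * 'I_n :=
  enum_val (cast_ord (esym (mxvec_cast m n)) p).

Definition tens m n (A : 'M[C]_m) (B : 'M[C]_n) : 'M[C]_(m * n) :=
  \matrix_(p, q) (A (pidx p).1 (pidx q).1 * B (pidx p).2 (pidx q).2).

(* (phi (x) id_k)(rho): phi applied blockwise *)
Definition tens_id d k (phi : 'M[C]_d -> 'M[C]_d) (rho : 'M[C]_(d * k))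
  : 'M[C]_(d * k) :=
  \matrix_(p, q)
    (phi (\matrix_(i, j) rho (mxvec_index i (pidx p).2) (mxvec_index j (pidx q).2))
       (pidx p).1 (pidx q).1).

Definition is_linear_map d (phi : 'M[C]_d -> 'M[C]_d) :=
  forall (a : C) (X Y : 'M[C]_d), phi (a *: X + Y) = a *: phi X + phi Y.

Definition completely_positive d (phi : 'M[C]_d -> 'M[C]_d) :=
  forall (k : nat) (rho : 'M[C]_(d * k)), psd rho -> psd (tens_id phi rho).

Definition trace_preserving d (phi : 'M[C]_d -> 'M[C]_d) :=
  forall X : 'M[C]_d, \tr (phi X) = \tr X.

Definition quantum_channel d (phi : 'M[C]_d -> 'M[C]_d) :=
  [/\ is_linear_map phi, completely_positive phi & trace_preserving phi].

Definition separable d k (rho : 'M[C]_(d * k)) :=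
  exists (r : nat) (pr : 'I_r -> C) (s : 'I_r -> 'M[C]_d) (t : 'I_r -> 'M[C]_k),
    [/\ forall i, 0 <= pr i, \sum_i pr i = 1,
        forall i, is_state (s i), forall i, is_state (t i) &
        rho = \sum_i pr i *: tens (s i) (t i)].

Definition entanglement_breaking d (psi : 'M[C]_d -> 'M[C]_d) :=
  forall (k : nat) (rho : 'M[C]_(d * k)), is_state rho ->
    separable (tens_id psi rho).

(* L is a limit point of the sequence of maps (phi^n)_n, the topology being
   that of entrywise convergence of the representing d^2 x d^2 matrices. *)
Definition limit_point_of_powers d (phi L : 'M[C]_d -> 'M[C]_d) :=
  is_linear_map L /\
  forall e : C, 0 < e -> forall N : nat, exists n : nat, (N <= n)%N /\
    forall i j, `|lin_mx (iter n phi) i j - lin_mx L i j| < e.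

Definition asymptotically_entanglement_saving d (phi : 'M[C]_d -> 'M[C]_d) :=
  forall L, limit_point_of_powers phi L -> ~ entanglement_breaking L.

End QDefs.

(* Let M be the matrix of phi and A that of an entanglement-breaking limit
   point L of the powers of phi.  Testing the Choi state of L o phi^k against
   the maximally entangled state, separability gives |tr (M^k A)| <= d for
   every k.  On the other hand the eigenvalues of M lie in the closed unit
   disc, and a pigeonhole (Dirichlet) argument along the powers M^n close to A
   yields a shift k and arbitrarily late such n with lambda^(n + k) close to 1
   for every unimodular eigenvalue lambda, while the other eigenvalues decay.
   Then tr (M^k A) is close to tr (M^(n + k)), hence to the number of
   unimodular eigenvalues, which exceeds d. *)

From HB Require Import structures.
From mathcomp Require Import all_boot all_order all_algebra ring.
From Stdlib Require Import Classical.
Import Order.TTheory GRing.Theory Num.Theory.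
Set Implicit Arguments. Unset Strict Implicit. Unset Printing Implicit Defensive.
Local Open Scope ring_scope.

Section TensorIndices.
Variable R : nmodType.

Lemma pidx_mxvec m n (i : 'I_m) (j : 'I_n) : pidx (mxvec_index i j) = (i, j).
Proof. by rewrite /pidx /mxvec_index cast_ordK enum_rankK. Qed.

Lemma mxvec_pidx m n (p : 'I_(m * n)) : mxvec_index (pidx p).1 (pidx p).2 = p.
Proof.
rewrite /pidx /mxvec_index.
case: (enum_val _) (enum_valK (cast_ord (esym (mxvec_cast m n)) p)) => a b /= ->.
exact: cast_ordKV.
Qed.

Lemma big_mxvec_index m n (F : 'I_(m * n) -> R) :
  \sum_p F p = \sum_i \sum_j F (mxvec_index i j).
Proof.
rewrite pair_big (reindex (fun ij : 'I_m * 'I_n => mxvec_index ij.1 ij.2)) //=.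
exists (fun p => pidx p) => [ij _|p _]; last exact: mxvec_pidx.
by rewrite pidx_mxvec -surjective_pairing.
Qed.

End TensorIndices.

Section LinearMaps.
Variable C : archiClosedFieldType.

Definition linear_of n (f : 'M[C]_n -> 'M[C]_n) (fl : is_linear_map f) :
  {linear 'M[C]_n -> 'M[C]_n} := HB.pack f (GRing.isLinear.Build _ _ _ _ f fl).

Lemma row_lin_mx m n (h : 'M[C]_(m, n) -> 'M[C]_(m, n)) i :
  delta_mx 0 i *m lin_mx h = mxvec (h (vec_mx (delta_mx 0 i))).
Proof. by apply/rowP => j; rewrite -rowE !mxE. Qed.

(* lin_mx f acts on row vectors, so composition reverses the product. *)
Lemma lin_mx_comp n (f g : 'M[C]_n -> 'M[C]_n) :
  is_linear_map f -> lin_mx (f \o g) = lin_mx g *m lin_mx f.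
Proof.
move=> fl; apply/row_matrixP => i; rewrite !rowE mulmxA !row_lin_mx.
by rewrite (mul_vec_lin (linear_of fl)).
Qed.

Lemma lin_mx_id n : lin_mx (@id 'M[C]_n) = 1%:M.
Proof. by apply/row_matrixP => i; rewrite !rowE row_lin_mx vec_mxK mulmx1. Qed.

Lemma is_linear_map_iter n (phi : 'M[C]_n -> 'M[C]_n) k :
  is_linear_map phi -> is_linear_map (iter k phi).
Proof. by move=> pl; elim: k => [|k IH] a X Y //=; rewrite IH pl. Qed.

Lemma lin_mx_iter n (phi : 'M[C]_n -> 'M[C]_n) k :
  is_linear_map phi -> lin_mx (iter k phi) = lin_mx phi ^+ k.
Proof.
move=> pl; elim: k => [|k IH]; first exact: lin_mx_id.
by rewrite exprSr -IH -mulmxE -lin_mx_comp.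
Qed.

Lemma mxtrace_lin_mx n (h : 'M[C]_n -> 'M[C]_n) :
  \tr (lin_mx h) = \sum_i \sum_j h (delta_mx i j) i j.
Proof.
rewrite /mxtrace big_mxvec_index; apply: eq_bigr => i _; apply: eq_bigr => j _.
by rewrite mxE /= vec_mx_delta mxvecE.
Qed.

End LinearMaps.

Section Triangular.
Variable R : pzRingType.

Lemma trig_mxM n (A B : 'M[R]_n) : is_trig_mx A -> is_trig_mx B ->
  is_trig_mx (A *m B) /\ forall i, (A *m B) i i = A i i * B i i.
Proof.
move=> /is_trig_mxP tA /is_trig_mxP tB; split.
  apply/is_trig_mxP => i j lij; rewrite mxE big1 // => k _.
  case: (ltnP i k) => [lik|lki]; first by rewrite tA ?mul0r.
  by rewrite tB ?mulr0 // (leq_ltn_trans lki lij).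
move=> i; rewrite mxE (bigD1 i) //= big1 ?addr0 // => k nki.
case: (ltnP i k) => [lik|lki]; first by rewrite tA ?mul0r.
rewrite tB ?mulr0 // ltn_neqAle lki andbT.
by apply: contra nki => /eqP h; apply/eqP/val_inj.
Qed.

Lemma mxtrace_trigX n (A : 'M[R]_n) k : is_trig_mx A ->
  \tr (A ^+ k) = \sum_i A i i ^+ k.
Proof.
move=> tA; suff [_ dk] : is_trig_mx (A ^+ k) /\ forall i, (A ^+ k) i i = A i i ^+ k.
  by apply: eq_bigr => i _; rewrite dk.
elim: k => [|k [tk dk]].
  by rewrite expr0; split=> [|i]; [exact: scalar_mx_is_trig | rewrite !mxE eqxx].
have [tkA dkA] := trig_mxM tk tA.
by rewrite exprSr -mulmxE; split => // i; rewrite dkA dk exprSr.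
Qed.

End Triangular.

Section Spectrum.
Variable C : numClosedFieldType.

Lemma char_poly_conj n (P M : 'M[C]_n) : P \in unitmx ->
  char_poly (P *m M *m invmx P) = char_poly M.
Proof.
move=> Pu; rewrite /char_poly.
have -> : char_poly_mx (P *m M *m invmx P) =
    map_mx polyC P *m char_poly_mx M *m map_mx polyC (invmx P).
  rewrite /char_poly_mx mulmxBr mulmxBl !map_mxM scalar_mxC; congr (_ - _).
  by rewrite -mulmxA -map_mxM mulmxV // map_mx1 mulmx1.
rewrite !det_mulmx mulrC mulrA -det_mulmx -map_mxM mulVmx //.
by rewrite map_mx1 det1 mul1r.
Qed.

Lemma mxtrace_exp_roots n (M : 'M[C]_n) (s : seq C) :
  char_poly M = \prod_(x <- s) ('X - x%:P) ->
  forall k, \tr (M ^+ k) = \sum_(x <- s) x ^+ k.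
Proof.
case: n M => [|n] M charM k.
  have : size s = 0%N by have := size_char_poly M; rewrite charM size_prod_XsubC; case.
  by case: s charM => // _ _; rewrite big_nil /mxtrace big_ord0.
have [P /unitarymx_unit Pu] := Schur M (ltn0Sn n).
rewrite /similar_to /conjmx pinvmxE // => tT.
have conjX j : (P *m M *m invmx P) ^+ j = P *m M ^+ j *m invmx P.
  elim: j => [|j IH]; first by rewrite !expr0 mulmx1 mulmxV.
  rewrite exprSr IH [in RHS]exprSr -!mulmxE !mulmxA.
  by rewrite -[_ *m invmx P *m P]mulmxA mulVmx // mulmx1.
have eig_diag : perm_eq s [seq (P *m M *m invmx P) i i | i : 'I_n.+1].
  apply: prod_XsubC_eq; rewrite -charM -(char_poly_conj M Pu).
  by rewrite char_poly_trig // big_image.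
rewrite (perm_big _ eig_diag) big_image /= -mxtrace_trigX // conjX.
by rewrite mxtrace_mulC mulmxA mulVmx // mul1mx.
Qed.

End Spectrum.

Section PositiveSemidefinite.
Variable C : archiClosedFieldType.

Lemma quad_formE n (A : 'M[C]_n) (v : 'cV[C]_n) :
  (adjmx v *m A *m v) 0 0 = \sum_p (v p 0)^* * \sum_q A p q * v q 0.
Proof.
rewrite mxE (eq_bigr (fun p => \sum_q (v q 0)^* * A q p * v p 0)); last first.
  by move=> p _; rewrite mxE mulr_suml; apply: eq_bigr => q _; rewrite !mxE.
rewrite exchange_big; apply: eq_bigr => q _; rewrite mulr_sumr.
by apply: eq_bigr => p _; rewrite mulrA.
Qed.

Lemma sum_delta_l n (i : 'I_n) (F : 'I_n -> C) : \sum_q (q == i)%:R * F q = F i.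
Proof.
rewrite (bigD1 i) //= eqxx mul1r big1 ?addr0 // => q /negbTE ->.
by rewrite mul0r.
Qed.

Definition vec2 n (i j : 'I_n) (a b : C) : 'cV[C]_n :=
  \col_k ((k == i)%:R * a + (k == j)%:R * b).

Lemma quad_form_vec2 n (A : 'M[C]_n) i j a b :
  (adjmx (vec2 i j a b) *m A *m vec2 i j a b) 0 0 =
  a^* * (A i i * a + A i j * b) + b^* * (A j i * a + A j j * b).
Proof.
rewrite quad_formE.
have inner p : \sum_q A p q * vec2 i j a b q 0 = A p i * a + A p j * b.
  under eq_bigr => q _ do
    rewrite mxE mulrDr !mulrA ![A p q * _]mulrC -[_ * a]mulrA -[_ * b]mulrA.
  by rewrite big_split /= !sum_delta_l.
under eq_bigr => p _ do rewrite inner mxE rmorphD /= !rmorphM /= !conjC_nat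
  mulrDl -!mulrA.
by rewrite big_split /= !sum_delta_l.
Qed.

Lemma psd_diag_ge0 n (A : 'M[C]_n) i : psd A -> 0 <= A i i.
Proof.
move=> /(_ (vec2 i i 1 0)).
by rewrite quad_form_vec2 conjC1 conjC0 mul0r addr0 mulr1 mulr0 addr0 mul1r.
Qed.

Lemma psd_hermitian n (A : 'M[C]_n) i j : psd A -> A j i = (A i j)^*.
Proof.
move=> psdA.
set x := A i i; set y := A j j; set u := A i j; set w := A j i.
have x_real := ger0_real (psd_diag_ge0 i psdA).
have y_real := ger0_real (psd_diag_ge0 j psdA).
have sum_real : u + w \is Num.real.
  have := psdA (vec2 i j 1 1); rewrite quad_form_vec2 !conjC1 -/x -/y -/u -/w.
  move=> /ger0_real re; rewrite (_ : u + w = 1 * (x * 1 + u * 1) +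
    1 * (w * 1 + y * 1) - x - y); last by ring.
  by rewrite !rpredB.
have diff_real : 'i * (u - w) \is Num.real.
  have := psdA (vec2 i j 1 'i); rewrite quad_form_vec2 conjC1 -/x -/y -/u -/w.
  move=> /ger0_real re; rewrite (_ : 'i * (u - w) = 1 * (x * 1 + u * 'i) +
    'i^* * (w * 1 + y * 'i) - x - y); first by rewrite !rpredB.
  rewrite conjCi; transitivity ('i * (u - w) - ('i * 'i + 1) * y); last by ring.
  by rewrite mulCii addNr mul0r subr0.
have conj_sum : u^* + w^* = u + w by rewrite -[RHS](conj_Creal sum_real) rmorphD.
have conj_diff : u^* - w^* = w - u.
  have := conj_Creal diff_real; rewrite rmorphM rmorphB /= conjCi mulNr => e.
  by apply: (mulfI (neq0Ci C)); rewrite -[LHS]opprK e -mulrN opprB.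
have two_neq0 : (2 : C) != 0 by rewrite pnatr_eq0.
apply: (mulfI two_neq0); transitivity ((u + w) + (w - u)); first by ring.
by rewrite -conj_sum -conj_diff; ring.
Qed.

Lemma psd_entry_le n (A : 'M[C]_n) i j :
  psd A -> A i j * (A i j)^* <= A i i * A j j.
Proof.
move=> psdA.
set x := A i i; set y := A j j; set u := A i j.
have x_ge0 := psd_diag_ge0 i psdA; have y_ge0 := psd_diag_ge0 j psdA.
have Aji : A j i = u^* by rewrite psd_hermitian.
have conj_y : y^* = y by rewrite conj_Creal // ger0_real.
have [y0|y_neq0] := eqVneq y 0.
  (* a vector (1, - c u^* ) with large real c makes the form negative unless u = 0 *)
  have [->|u_neq0] := eqVneq u 0; first by rewrite mul0r y0 mulr0.
  have uu_gt0 : 0 < u * u^* by rewrite mul_conjC_gt0.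
  set c := (x + 1) / (2 * (u * u^*)).
  have c_real : c \is Num.real.
    by apply/ger0_real/divr_ge0; [rewrite addr_ge0 | rewrite mulr_ge0 ?ltW].
  have := psdA (vec2 i j 1 (- c * u^*)).
  rewrite quad_form_vec2 -/x -/u -/y Aji y0 rmorphM rmorphN /= conjCK.
  rewrite (conj_Creal c_real) conjC1 !mul1r mulr1 mul0r addr0.
  have -> : x + u * (- c * u^*) + - c * u * (u^* * 1) = x - 2 * c * (u * u^*) by ring.
  have -> : 2 * c * (u * u^*) = x + 1.
    rewrite /c mulrA [2 * _]mulrC -!mulrA mulVf ?mulr1 //.
    by rewrite mulf_neq0 ?pnatr_eq0 // lt0r_neq0.
  by rewrite opprD addrA subrr sub0r oppr_ge0 lt_geF // ltr01.
have := psdA (vec2 i j y (- u^*)).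
rewrite quad_form_vec2 -/x -/u -/y Aji conj_y rmorphN /= conjCK.
have -> : y * (x * y + u * - u^*) + - u * (u^* * y + y * - u^*) =
          y * (x * y - u * u^*) by ring.
have y_gt0 : 0 < y by rewrite lt0r y_neq0.
by rewrite pmulr_rge0 // subr_ge0 mulrC.
Qed.

Lemma psd_entry_prod_le n (s t : 'M[C]_n) i j : psd s -> psd t ->
  `|s i j| * `|t i j| <= (s i i * t j j + s j j * t i i) / 2.
Proof.
move=> psds psdt.
have [sii_ge0 sjj_ge0] := (psd_diag_ge0 i psds, psd_diag_ge0 j psds).
have [tii_ge0 tjj_ge0] := (psd_diag_ge0 i psdt, psd_diag_ge0 j psdt).
set al := s i i * t j j; set be := s j j * t i i.
have al_ge0 : 0 <= al by rewrite mulr_ge0.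
have be_ge0 : 0 <= be by rewrite mulr_ge0.
rewrite -(ler_sqr (mulr_ge0 (normr_ge0 _) (normr_ge0 _))); last first.
  by rewrite nnegrE divr_ge0 ?ler0n ?addr_ge0.
apply: (le_trans (y := al * be)).
  rewrite exprMn !normCK.
  rewrite [al * be](_ : _ = (s i i * s j j) * (t i i * t j j)); last first.
    by rewrite /al /be; ring.
  apply: (le_trans (ler_wpM2r _ (psd_entry_le i j psds))); first by rewrite mul_conjC_ge0.
  by rewrite ler_wpM2l ?mulr_ge0 ?psd_entry_le.
have diff_real : (al - be) / 2 \is Num.real.
  by rewrite rpredM ?rpredV ?rpred_nat ?rpredB ?ger0_real.
rewrite -subr_ge0 [X in 0 <= X](_ : _ = ((al - be) / 2) ^+ 2); last by field.
by rewrite -(real_normK diff_real) exprn_ge0.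
Qed.

Lemma psd_pairing_le_trace n (s t : 'M[C]_n) : psd s -> psd t ->
  `|\sum_i \sum_j s i j * t i j| <= \tr s * \tr t.
Proof.
move=> psds psdt.
have trst : \tr s * \tr t = \sum_i \sum_j s i i * t j j.
  by rewrite /mxtrace mulr_suml; apply: eq_bigr => i _; rewrite mulr_sumr.
have -> : \tr s * \tr t = \sum_i \sum_j (s i i * t j j + s j j * t i i) / 2.
  under eq_bigr => i _ do rewrite -mulr_suml big_split /=.
  by rewrite -mulr_suml big_split /= -trst [X in _ + X]exchange_big -trst; field.
apply: (le_trans (ler_norm_sum _ _ _)); apply: ler_sum => i _.
apply: (le_trans (ler_norm_sum _ _ _)); apply: ler_sum => j _.
by rewrite normrM psd_entry_prod_le.
Qed.

End PositiveSemidefinite.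

Section Channels.
Variable C : archiClosedFieldType.

Lemma tens_id_comp d k (f g : 'M[C]_d -> 'M[C]_d) (rho : 'M[C]_(d * k)) :
  tens_id (f \o g) rho = tens_id f (tens_id g rho).
Proof.
apply/matrixP => p q; rewrite !mxE; congr (f _ _ _).
by apply/matrixP => i j; rewrite !mxE !pidx_mxvec.
Qed.

Lemma tens_id_id d k (rho : 'M[C]_(d * k)) : tens_id id rho = rho.
Proof. by apply/matrixP => p q; rewrite !mxE !mxvec_pidx. Qed.

Lemma mxtrace_tens_id d k (psi : 'M[C]_d -> 'M[C]_d) (rho : 'M[C]_(d * k)) :
  trace_preserving psi -> \tr (tens_id psi rho) = \tr rho.
Proof.
move=> tp; rewrite /mxtrace !big_mxvec_index exchange_big [RHS]exchange_big.
apply: eq_bigr => c _.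
set B := \matrix_(i, j) rho (mxvec_index i c) (mxvec_index j c).
transitivity (\tr (psi B)); first by apply: eq_bigr => i _; rewrite mxE !pidx_mxvec.
by rewrite tp; apply: eq_bigr => i _; rewrite mxE.
Qed.

Lemma tens_id_state d k (psi : 'M[C]_d -> 'M[C]_d) (rho : 'M[C]_(d * k)) :
  quantum_channel psi -> is_state rho -> is_state (tens_id psi rho).
Proof.
by case=> _ cp tp [psd_rho tr_rho]; split; [apply: cp | rewrite mxtrace_tens_id].
Qed.

Lemma quantum_channel_iter d (phi : 'M[C]_d -> 'M[C]_d) n :
  quantum_channel phi -> quantum_channel (iter n phi).
Proof.
case=> pl cp tp; split; first exact: is_linear_map_iter.
  move=> k rho; elim: n => [|n IH] /=; first by rewrite tens_id_id.
  by move=> psd_rho; rewrite (tens_id_comp phi (iter n phi)); apply/cp/IH.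
by move=> X; elim: n => [|n IH] //=; rewrite tp.
Qed.

(* The maximally entangled state |Ω><Ω| with Ω = d^(-1/2) Σ_i e_i ⊗ e_i. *)
Definition max_entangled d : 'M[C]_(d * d) :=
  \matrix_(p, q) (d%:R^-1 * ((pidx p).1 == (pidx p).2)%:R *
                            ((pidx q).1 == (pidx q).2)%:R).

Lemma max_entangled_state d : (0 < d)%N -> is_state (max_entangled d).
Proof.
move=> d_gt0; pose w (p : 'I_(d * d)) : C := ((pidx p).1 == (pidx p).2)%:R.
split.
  move=> v; rewrite quad_formE.
  set a := \sum_q w q * v q 0.
  have -> : \sum_p (v p 0)^* * \sum_q max_entangled d p q * v q 0 =
            d%:R^-1 * (a * a^*).
    rewrite {2}/a rmorph_sum !mulr_sumr; apply: eq_bigr => p _.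
    rewrite (eq_bigr (fun q => d%:R^-1 * w p * (w q * v q 0))) -?mulr_sumr -/a.
      by rewrite rmorphM /= conjC_nat; ring.
    by move=> q _; rewrite mxE; ring.
  by rewrite mulr_ge0 ?invr_ge0 ?ler0n ?mul_conjC_ge0.
rewrite /mxtrace big_mxvec_index (eq_bigr (fun => d%:R^-1)).
  by rewrite sumr_const card_ord -[_ *+ d]mulr_natr mulVf // pnatr_eq0 -lt0n.
move=> i _; rewrite (bigD1 i) //= big1 ?addr0.
  by rewrite mxE pidx_mxvec /= eqxx !mulr1.
by move=> j /negbTE nji; rewrite mxE pidx_mxvec /= eq_sym nji !mulr0.
Qed.

(* d <Ω| X |Ω> *)
Definition omega_form d (X : 'M[C]_(d * d)) : C :=
  \sum_i \sum_j X (mxvec_index i i) (mxvec_index j j).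

Lemma omega_form_tens d (s t : 'M[C]_d) :
  omega_form (tens s t) = \sum_i \sum_j s i j * t i j.
Proof.
by apply: eq_bigr => i _; apply: eq_bigr => j _; rewrite mxE !pidx_mxvec.
Qed.

Lemma omega_form_sum d r (pr : 'I_r -> C) (X : 'I_r -> 'M[C]_(d * d)) :
  omega_form (\sum_k pr k *: X k) = \sum_k pr k * omega_form (X k).
Proof.
under [RHS]eq_bigr => k _ do rewrite mulr_sumr; rewrite exchange_big.
apply: eq_bigr => i _; under [RHS]eq_bigr => j _ do rewrite mulr_sumr.
rewrite exchange_big; apply: eq_bigr => j _.
by rewrite summxE; apply: eq_bigr => k _; rewrite mxE.
Qed.

Lemma omega_form_choi d (f : 'M[C]_d -> 'M[C]_d) : is_linear_map f ->
  omega_form (tens_id f (max_entangled d)) = d%:R^-1 * \tr (lin_mx f).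
Proof.
move=> fl; rewrite mxtrace_lin_mx mulr_sumr; apply: eq_bigr => i _.
rewrite mulr_sumr; apply: eq_bigr => j _; rewrite mxE !pidx_mxvec /=.
set B := \matrix_(_, _) _.
have -> : B = d%:R^-1 *: delta_mx i j.
  apply/matrixP => a b; rewrite !mxE !pidx_mxvec /=.
  by case: (a == i); case: (b == j); rewrite ?mulr1 ?mulr0.
by rewrite [f _](linearZZ (linear_of fl)) mxE.
Qed.

Lemma separable_omega_form_le d (rho : 'M[C]_(d * d)) :
  separable rho -> `|omega_form rho| <= 1.
Proof.
move=> [r [pr [s [t [pr_ge0 pr_sum s_state t_state ->]]]]].
rewrite omega_form_sum -pr_sum; apply: (le_trans (ler_norm_sum _ _ _)).
apply: ler_sum => k _; rewrite normrM ger0_norm // ler_piMr // omega_form_tens.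
have [[psd_s tr_s] [psd_t tr_t]] := (s_state k, t_state k).
by have := psd_pairing_le_trace psd_s psd_t; rewrite tr_s tr_t mulr1.
Qed.

Lemma entanglement_breaking_trace_le d (L psi : 'M[C]_d -> 'M[C]_d) :
  is_linear_map L -> entanglement_breaking L -> quantum_channel psi ->
  `|\tr (lin_mx psi *m lin_mx L)| <= d%:R.
Proof.
case: d L psi => [|d] L psi Ll EB_L chan_psi.
  by rewrite /mxtrace big_ord0 normr0.
have pl : is_linear_map psi by case: chan_psi.
have state := tens_id_state chan_psi (max_entangled_state (ltn0Sn d)).
have := separable_omega_form_le (EB_L _ _ state).
rewrite -tens_id_comp omega_form_choi; last by move=> a X Y; rewrite /= pl Ll.
rewrite lin_mx_comp // normrM ger0_norm ?invr_ge0 ?ler0n //.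
by rewrite ler_pdivrMl ?ltr0n // mulr1.
Qed.

End Channels.

Section Powers.
Variable R : archiNumFieldType.

Lemma bernoulli_le (h : R) n : 0 <= h -> 1 + n%:R * h <= (1 + h) ^+ n.
Proof.
move=> h_ge0; elim: n => [|n IH]; first by rewrite mul0r addr0 expr0.
rewrite exprSr; apply: le_trans (ler_wpM2r _ IH); last by rewrite addr_ge0.
have -> : (1 + n%:R * h) * (1 + h) = 1 + n.+1%:R * h + n%:R * h * h.
  by rewrite -addn1 natrD; ring.
by rewrite lerDl !mulr_ge0 ?ler0n.
Qed.

Lemma exprn_unbounded (r B : R) : 1 < r -> 0 <= B ->
  exists N, forall n, (N <= n)%N -> B < r ^+ n.
Proof.
move=> r_gt1 B_ge0; set h := r - 1.
have h_gt0 : 0 < h by rewrite subr_gt0.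
exists (Num.bound (B / h)) => n le_Nn.
have -> : r = 1 + h by rewrite /h addrC subrK.
apply: lt_le_trans (bernoulli_le n (ltW h_gt0)).
apply: (lt_le_trans (y := n%:R * h)); last by rewrite lerDr.
rewrite -ltr_pdivrMr //.
by apply: lt_le_trans (archi_boundP (divr_ge0 B_ge0 (ltW h_gt0))) _; rewrite ler_nat.
Qed.

Lemma exprn_small (x e : R) : `|x| < 1 -> 0 < e ->
  exists N, forall n, (N <= n)%N -> `|x ^+ n| < e.
Proof.
move=> x_lt1 e_gt0; have [->|x_neq0] := eqVneq x 0.
  by exists 1%N => -[|n] // _; rewrite expr0n /= normr0.
have x_gt0 : 0 < `|x| by rewrite normr_gt0.
have inv_gt1 : 1 < `|x|^-1 by rewrite invf_gt1.
have inv_e_ge0 : 0 <= e^-1 by rewrite invr_ge0 ltW.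
have [N HN] := exprn_unbounded inv_gt1 inv_e_ge0.
exists N => n le_Nn; have := HN n le_Nn.
by rewrite exprVn normrX ltf_pV2 // posrE exprn_gt0.
Qed.

Lemma sum_exprn_small (r : seq R) : (forall x, x \in r -> `|x| < 1) ->
  forall e, 0 < e -> exists N, forall n, (N <= n)%N -> `|\sum_(x <- r) x ^+ n| < e.
Proof.
elim: r => [|y r IH] r_lt1 e e_gt0.
  by exists 0%N => n _; rewrite big_nil normr0.
have e2_gt0 : 0 < e / 2 by rewrite divr_gt0.
have [N1 H1] := exprn_small (r_lt1 y (mem_head _ _)) e2_gt0.
have [|N2 H2] := IH _ (e / 2) e2_gt0.
  by move=> x xr; apply: r_lt1; rewrite in_cons xr orbT.
exists (maxn N1 N2) => n; rewrite geq_max => /andP [le_N1n le_N2n].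
rewrite big_cons; apply: (le_lt_trans (ler_normD _ _)).
by rewrite [e](splitr e) ltrD ?H1 ?H2.
Qed.

Lemma truncn_eq_dist_lt1 (x y : R) : 0 <= x -> 0 <= y ->
  Num.truncn x = Num.truncn y -> `|x - y| < 1.
Proof.
move=> x_ge0 y_ge0 eq_xy.
have /andP [lx ux] := truncn_itv x_ge0; have /andP [ly uy] := truncn_itv y_ge0.
rewrite eq_xy in lx ux.
rewrite real_ltr_norml ?rpredB ?ger0_real //; apply/andP; split.
  have uy' : - (Num.truncn y).+1%:R < - y by rewrite ltrN2.
  by have := ler_ltD lx uy'; rewrite -natr1 opprD addrA subrr add0r.
have ly' : - y <= - (Num.truncn y)%:R by rewrite lerN2.
by have := ltr_leD ux ly'; rewrite -natr1 addrAC subrr add0r.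
Qed.

End Powers.

Section UnitModulus.
Variable R : numDomainType.

Lemma normr_exprn_unit (x : R) n : `|x| = 1 -> `|x ^+ n| = 1.
Proof. by move=> x1; rewrite normrX x1 expr1n. Qed.

Lemma exprn_shift_close (x : R) n n0 K e : `|x| = 1 -> (n0 <= K)%N ->
  `|x ^+ n - x ^+ n0| < e -> `|x ^+ K - 1| < e -> `|x ^+ (n + (K - n0)) - 1| < e + e.
Proof.
move=> x1 le_n0K close_n close_K.
have shifted : x ^+ (n + (K - n0)) * x ^+ n0 = x ^+ n * x ^+ K.
  by rewrite -!exprD -addnA subnK.
have -> : `|x ^+ (n + (K - n0)) - 1| = `|x ^+ n * x ^+ K - x ^+ n0|.
  by rewrite -shifted -{2}[x ^+ n0]mul1r -mulrBl normrM normr_exprn_unit // mulr1.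
have -> : x ^+ n * x ^+ K - x ^+ n0 = x ^+ n * (x ^+ K - 1) + (x ^+ n - x ^+ n0).
  by ring.
apply: (le_lt_trans (ler_normD _ _)); rewrite normrM normr_exprn_unit // mul1r.
by rewrite addrC ltrD.
Qed.

End UnitModulus.

Section ComplexParts.
Variable C : numClosedFieldType.

Lemma normC_Re_le (z : C) : `|'Re z| <= `|z|.
Proof. exact: leif_le (leif_normC_Re_Creal z). Qed.

Lemma normC_Im_le (z : C) : `|'Im z| <= `|z|.
Proof.
by rewrite -normrN -ReMir (le_trans (normC_Re_le _)) // normrM normCi mulr1.
Qed.

Lemma normC_le_Re_Im (z : C) : `|z| <= `|'Re z| + `|'Im z|.
Proof.
by rewrite {1}[z]Crect (le_trans (ler_normD _ _)) // normrM normCi mul1r.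
Qed.

End ComplexParts.

Lemma pigeonhole_nat (X : finType) (g : nat -> X) :
  exists a b, (a < b)%N /\ g a = g b.
Proof.
pose f (i : 'I_#|X|.+1) := g i.
have /injectivePn [x [y neq_xy eq_fxy]] : ~~ injectiveb f.
  by apply/negP => /injectiveP/leq_card; rewrite card_ord ltnn.
by case: (ltngtP x y) => [lt_xy|lt_yx|/val_inj eq_xy];
  [exists x, y | exists y, x | rewrite eq_xy eqxx in neq_xy].
Qed.

(* Infinite pigeonhole principle, uniformly over the decreasing family G. *)
Lemma frequent_colour (X : finType) (G : nat -> nat -> Prop) (g : nat -> X) :
  (forall j j' n, (j <= j')%N -> G j' n -> G j n) ->
  (forall j N, exists2 n, (N <= n)%N & G j n) ->
  exists c, forall j N, exists n, [/\ (N <= n)%N, G j n & g n = c].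
Proof.
move=> G_decr G_freq; apply: NNPP => no_colour.
have rare c : exists jN : nat * nat,
    forall n, (jN.2 <= n)%N -> G jN.1 n -> g n <> c.
  apply: NNPP => not_rare; apply: no_colour; exists c => j N.
  apply: NNPP => no_n; apply: not_rare; exists (j, N) => n /= le_Nn Gn gn.
  by apply: no_n; exists n.
have [F HF] := fin_all_exists rare.
have [n le_Nn Gn] := G_freq (\max_c (F c).1) (\max_c (F c).2).
apply: (HF (g n) n) => //; first by apply: leq_trans le_Nn; exact: leq_bigmax.
by apply: G_decr Gn; exact: leq_bigmax.
Qed.

Section Rotations.
Variable C : archiClosedFieldType.

(* Quantisation of [-1, 1] into 2T + 1 cells of width 1 / T. *)
Definition cell_real T (a : C) : 'I_(2 * T).+1 :=
  inord (Num.truncn ((a + 1) * T%:R)).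

Lemma cell_real_close T (a b : C) : (0 < T)%N ->
  a \is Num.real -> b \is Num.real -> `|a| <= 1 -> `|b| <= 1 ->
  cell_real T a = cell_real T b -> `|a - b| < T%:R^-1.
Proof.
move=> T_gt0 a_real b_real a_le1 b_le1.
have T_pos : 0 < T%:R :> C by rewrite ltr0n.
have shift_ge0 (c : C) : c \is Num.real -> `|c| <= 1 -> 0 <= (c + 1) * T%:R.
  move=> c_real c_le1; rewrite mulr_ge0 ?ler0n // -lerBlDr sub0r.
  by move: c_le1; rewrite real_ler_norml // => /andP [].
have shift_small (c : C) : c \is Num.real -> `|c| <= 1 ->
    (Num.truncn ((c + 1) * T%:R) < (2 * T).+1)%N.
  move=> c_real c_le1; rewrite ltnS real_truncn_le_nat; last first.
    by rewrite rpredM ?rpredD ?rpred1 ?rpred_nat.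
  apply: (le_lt_trans (y := (2 * T)%:R)); last by rewrite ltr_nat.
  rewrite natrM ler_wpM2r ?ler0n // (_ : 2%:R = 1 + 1) //.
  by rewrite lerD2r; move: c_le1; rewrite real_ler_norml // => /andP [].
move=> /(congr1 val) /=; rewrite !inordK ?shift_small // => eq_trunc.
have := truncn_eq_dist_lt1 (shift_ge0 a a_real a_le1) (shift_ge0 b b_real b_le1) eq_trunc.
rewrite -mulrBl (_ : (a + 1) - (b + 1) = a - b); last by ring.
by rewrite normrM (gtr0_norm T_pos) -ltr_pdivlMr // mul1r.
Qed.

Definition cell T (z : C) := (cell_real T ('Re z), cell_real T ('Im z)).

Lemma cell_close T (z w : C) : (0 < T)%N -> `|z| <= 1 -> `|w| <= 1 ->
  cell T z = cell T w -> `|z - w| < 2 * T%:R^-1.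
Proof.
move=> T_gt0 z_le1 w_le1 [eq_Re eq_Im].
apply: (le_lt_trans (normC_le_Re_Im _)); rewrite mulr_natl mulr2n.
rewrite !raddfB /=; apply: ltrD; apply: cell_real_close => //;
  by [exact: Creal_Re | exact: Creal_Im | apply: le_trans (normC_Re_le _) _
     | apply: le_trans (normC_Im_le _) _].
Qed.

Lemma dirichlet_approx (I : finType) (lam : I -> C) (T N0 : nat) :
  (0 < T)%N -> (0 < N0)%N -> (forall i, `|lam i| = 1) ->
  exists K, (N0 <= K)%N /\ forall i, `|lam i ^+ K - 1| < 2 * T%:R^-1.
Proof.
move=> T_gt0 N0_gt0 lam1.
pose g q := [ffun i => cell T (lam i ^+ (N0 * q))].
have [a [b [lt_ab eq_gab]]] := pigeonhole_nat g.
exists (N0 * (b - a))%N; split; first by rewrite leq_pmulr ?subn_gt0.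
move=> i; have := congr1 (fun f : {ffun _ -> _} => f i) eq_gab; rewrite !ffunE.
move=> /cell_close -/(_ T_gt0); rewrite !normr_exprn_unit // lexx.
have -> : (N0 * b = N0 * a + N0 * (b - a))%N by rewrite -mulnDr subnKC // ltnW.
rewrite exprD -{1}[lam i ^+ (N0 * a)]mulr1 -mulrBr normrM normr_exprn_unit //.
by rewrite mul1r distrC => /(_ isT isT).
Qed.

Lemma recurrent_shift_rotations (I : finType) (lam : I -> C) (P : C -> nat -> Prop) :
  (forall i, `|lam i| = 1) ->
  (forall e e' n, e <= e' -> P e n -> P e' n) ->
  (forall e, 0 < e -> forall N, exists2 n, (N <= n)%N & P e n) ->
  forall eta, 0 < eta -> exists k, forall e, 0 < e -> forall N,
    exists n, [/\ (N <= n)%N, P e n & forall i, `|lam i ^+ (n + k) - 1| < eta].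
Proof.
move=> lam1 P_mono P_freq eta eta_gt0.
pose T := Num.bound (4 / eta).
have T_big : 4 / eta < T%:R by rewrite archi_boundP // divr_ge0 ?ler0n ?ltW.
have T_gt0 : (0 < T)%N.
  by rewrite -(ltr0n C) (le_lt_trans _ T_big) // divr_ge0 ?ler0n ?ltW.
have cell_prec : 2 * T%:R^-1 + 2 * T%:R^-1 < eta.
  by rewrite -mulrDl -natrD ltr_pdivrMr ?ltr0n // mulrC -ltr_pdivrMr.
pose g n := [ffun i => cell T (lam i ^+ n)].
pose G j n := P (j.+1)%:R^-1 n.
have G_decr j j' n : (j <= j')%N -> G j' n -> G j n.
  by move=> le_jj'; apply: P_mono; rewrite lef_pV2 ?posrE ?ltr0n // ler_nat.
have G_freq j N : exists2 n, (N <= n)%N & G j n by apply: P_freq; rewrite invr_gt0 ltr0n.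
have [c Hc] := frequent_colour g G_decr G_freq.
have [n0 [_ _ g_n0]] := Hc 0%N 0%N.
have [K [lt_n0K K_close]] := dirichlet_approx T_gt0 (ltn0Sn n0) lam1.
exists (K - n0)%N => e e_gt0 N.
have [n [le_Nn Gn g_n]] := Hc (Num.bound e^-1) N.
exists n; split => // [|i].
  apply: P_mono Gn; rewrite -[X in _ <= X]invrK lef_pV2 ?posrE ?ltr0n ?invr_gt0 //.
  have e_inv_ge0 : 0 <= e^-1 by rewrite invr_ge0 ltW.
  by apply/ltW/(lt_trans (archi_boundP e_inv_ge0)); rewrite ltr_nat.
apply: lt_trans cell_prec; apply: exprn_shift_close (lam1 i) (ltnW lt_n0K) _ (K_close i).
have := congr1 (fun f : {ffun _ -> _} => f i) (etrans g_n (esym g_n0)).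
by rewrite !ffunE => /cell_close; rewrite !normr_exprn_unit //; apply.
Qed.

End Rotations.

Section LimitPoints.
Variable C : archiClosedFieldType.

Definition mx_limit_point N (M A : 'M[C]_N) :=
  forall e, 0 < e -> forall n0, exists2 n, (n0 <= n)%N &
    forall a b, `|(M ^+ n) a b - A a b| < e.

Lemma mxtrace_mul_le N (B D : 'M[C]_N) e : (forall a b, `|D a b| < e) ->
  `|\tr (B *m D)| <= (\sum_a \sum_b `|B a b|) * e.
Proof.
move=> D_small; rewrite /mxtrace mulr_suml.
apply: (le_trans (ler_norm_sum _ _ _)); apply: ler_sum => a _.
rewrite mxE mulr_suml; apply: (le_trans (ler_norm_sum _ _ _)); apply: ler_sum => b _.
by rewrite normrM ler_wpM2l // ltW.
Qed.

Lemma limit_point_eigenvalue_le1 N (M A : 'M[C]_N) x :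
  mx_limit_point M A -> root (char_poly M) x -> `|x| <= 1.
Proof.
move=> MA; rewrite -eigenvalue_root_char => /eigenvalueP [v vM v_neq0].
have vMn n : v *m M ^+ n = x ^+ n *: v.
  elim: n => [|n IH]; first by rewrite !expr0 scale1r mulmx1.
  by rewrite exprSr -mulmxE mulmxA IH -scalemxAl vM scalerA exprSr.
have [k vk_neq0] : exists k, v 0 k != 0.
  have [k|v0] := pickP (fun k => v 0 k != 0); first by exists k.
  by case/eqP: v_neq0; apply/rowP => k; rewrite mxE; apply/eqP/negbFE/v0.
have vk_gt0 : 0 < `|v 0 k| by rewrite normr_gt0.
(* the k-th coordinate of v M^n stays bounded along the powers close to A *)
set B := \sum_b `|v 0 b| * (`|A b k| + 1).
have B_ge0 : 0 <= B by rewrite sumr_ge0 // => b _; rewrite mulr_ge0 ?addr_ge0.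
rewrite real_leNgt ?ger0_real //; apply/negP => x_gt1.
have [N0 HN0] := exprn_unbounded x_gt1 (divr_ge0 B_ge0 (ltW vk_gt0)).
have [n le_N0n close_n] := MA 1 ltr01 N0.
have bounded : `|x ^+ n * v 0 k| <= B.
  have -> : x ^+ n * v 0 k = (v *m M ^+ n) 0 k by rewrite vMn mxE.
  rewrite mxE; apply: (le_trans (ler_norm_sum _ _ _)); apply: ler_sum => b _.
  rewrite normrM ler_wpM2l // -[(M ^+ n) b k](subrK (A b k)).
  by apply: (le_trans (ler_normD _ _)); rewrite addrC lerD2l ltW.
have := HN0 n le_N0n; rewrite ltr_pdivrMr // -normrX -normrM.
by move=> /lt_geF; rewrite bounded.
Qed.

Lemma limit_point_shift N (M A : 'M[C]_N) (I : finType) (lam : I -> C) :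
  mx_limit_point M A -> (forall i, `|lam i| = 1) ->
  forall eta, 0 < eta -> exists k, forall N0, exists n, [/\ (N0 <= n)%N,
    `|\tr (M ^+ k *m (M ^+ n - A))| < eta &
    forall i, `|lam i ^+ (n + k) - 1| < eta].
Proof.
move=> MA lam1 eta eta_gt0.
pose P e n := forall a b, `|(M ^+ n) a b - A a b| < e.
have P_mono e e' n : e <= e' -> P e n -> P e' n.
  by move=> le_ee' Pn a b; apply: lt_le_trans le_ee'.
have [k Hk] := recurrent_shift_rotations lam1 P_mono MA eta_gt0.
exists k => N0.
pose S := \sum_a \sum_b `|(M ^+ k) a b| + 1.
have S_gt0 : 0 < S.
  by rewrite ltr_wpDl ?ltr01 //; apply/sumr_ge0 => a _; apply/sumr_ge0.
have [n [le_N0n Pn lam_close]] := Hk (eta / S) (divr_gt0 eta_gt0 S_gt0) N0.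
exists n; split => //.
apply: le_lt_trans (mxtrace_mul_le _ (e := eta / S) _) _.
  by move=> a b; rewrite !mxE; apply: Pn.
by rewrite mulrA ltr_pdivrMr // mulrC ltr_pM2l // ltrDl ltr01.
Qed.

Lemma limit_point_trace_peripheral N (M A : 'M[C]_N) (s : seq C) :
  char_poly M = \prod_(x <- s) ('X - x%:P) -> mx_limit_point M A ->
  forall eps, 0 < eps -> exists k,
    `|\tr (M ^+ k *m A) - (count (fun x => `|x| == 1) s)%:R| < eps.
Proof.
move=> charM MA eps eps_gt0.
pose Lam := [seq x <- s | `|x| == 1]; pose Rm := [seq x <- s | `|x| != 1].
pose m := size Lam; pose lam (j : 'I_m) := nth 0 Lam j.
have lam1 j : `|lam j| = 1.
  have : lam j \in Lam by rewrite mem_nth.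
  by rewrite mem_filter => /andP [/eqP].
have Rm_lt1 x : x \in Rm -> `|x| < 1.
  rewrite mem_filter lt_neqAle => /andP [-> xs] /=.
  by apply: limit_point_eigenvalue_le1 MA _; rewrite charM root_prod_XsubC.
have trace_split n : \tr (M ^+ n) = \sum_j lam j ^+ n + \sum_(x <- Rm) x ^+ n.
  have -> : \sum_j lam j ^+ n = \sum_(x <- Lam) x ^+ n.
    by rewrite [RHS](big_nth 0) big_mkord.
  rewrite /Lam /Rm !big_filter (mxtrace_exp_roots charM).
  exact: bigID.
pose eta := eps / (m + 2)%:R.
have eta_gt0 : 0 < eta by rewrite divr_gt0 ?ltr0n ?addn2.
have [k Hk] := limit_point_shift MA lam1 eta_gt0.
have [Nd Rm_small] := sum_exprn_small Rm_lt1 eta_gt0.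
have [n [le_Ndn perturbation lam_close]] := Hk Nd.
have peripheral : `|\sum_j lam j ^+ (n + k) - m%:R| <= m%:R * eta.
  have -> : \sum_j lam j ^+ (n + k) - m%:R = \sum_j (lam j ^+ (n + k) - 1).
    by rewrite sumrB sumr_const card_ord.
  have -> : m%:R * eta = \sum_(j < m) eta by rewrite sumr_const card_ord mulr_natl.
  apply: le_trans (ler_norm_sum _ _ _) _.
  by apply: ler_sum => j _; apply/ltW/lam_close.
have decaying : `|\sum_(x <- Rm) x ^+ (n + k)| < eta.
  by apply: Rm_small; rewrite (leq_trans le_Ndn) ?leq_addr.
exists k; rewrite -size_filter -/Lam -/m.
have -> : \tr (M ^+ k *m A) - m%:R =
    (\sum_j lam j ^+ (n + k) - m%:R) + \sum_(x <- Rm) x ^+ (n + k)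
    - \tr (M ^+ k *m (M ^+ n - A)).
  have -> : \tr (M ^+ k *m A) = \tr (M ^+ (n + k)) - \tr (M ^+ k *m (M ^+ n - A)).
    by rewrite mulmxBr raddfB /= mulmxE -exprD addnC opprB addrC subrK.
  by rewrite trace_split; ring.
have -> : eps = m%:R * eta + eta + eta.
  rewrite -addrA -mulr2n -[eta *+ 2]mulr_natl -mulrDl -natrD mulrC divfK //.
  by rewrite pnatr_eq0 addn2.
apply: le_lt_trans (ler_normB _ _) _; rewrite ltrD //.
by apply: le_lt_trans (ler_normD _ _) _; rewrite ler_ltD.
Qed.

End LimitPoints.

Theorem mainTheorem15 (C : archiClosedFieldType) (Ccomplete : complete_field C)
  (d : nat) (phi : 'M[C]_d -> 'M[C]_d) (Hphi : quantum_channel phi)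
  (s : seq C) (Hs : char_poly (lin_mx phi) = \prod_(x <- s) ('X - x%:P))
  (Hper : (d < count (fun x : C => (`|x| == 1)%R) s)%N) :
  asymptotically_entanglement_saving phi.
Proof.
move=> L [Ll L_lim] EB_L.
have pl : is_linear_map phi by case: Hphi.
have L_lim_mx : mx_limit_point (lin_mx phi) (lin_mx L).
  move=> e e_gt0 n0; have [n [le_n0n close_n]] := L_lim e e_gt0 n0.
  by exists n => //; rewrite -lin_mx_iter.
have half_gt0 : 0 < 2^-1 :> C by rewrite invr_gt0 ltr0n.
have [k close_k] := limit_point_trace_peripheral Hs L_lim_mx half_gt0.
have := entanglement_breaking_trace_le Ll EB_L (quantum_channel_iter k Hphi).
rewrite lin_mx_iter // => trace_le.
set m := count _ s in close_k Hper; set t := \tr _ in close_k trace_le.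
have : m%:R < d%:R + 2^-1 :> C.
  apply: lt_le_trans (lerD trace_le (lexx 2^-1)); rewrite -ltrBlDl.
  apply: le_lt_trans close_k; rewrite distrC.
  by have := lerB_dist (m%:R : C) t; rewrite normr_nat.
rewrite -(ler_nat C) in Hper; move/(le_lt_trans Hper).
have half_lt1 : 2^-1 < 1 :> C by rewrite invf_lt1 ?ltr0n // ltr1n.
by rewrite -natr1 ltrD2l => /(lt_trans half_lt1); rewrite ltxx.
Qed.
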